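(* Let $I$, $\tilde I$, $h$, $h_A$ satisfy the compatibility assumption in the context, and let $\Rightarrow_t$, $\Rightarrow_e$ be as in the context with the witness set $W_{\tilde s'}$ taken to be the set of all temporal paths of $\tilde I$ from a state of $\tilde S_0$ to $\tilde s'$. Let $\tilde\pi=\tilde s_1\to\cdots\to\tilde s_n$ be a path in $\tilde I$ with temporal edges $\tilde s_k\xrightarrow{\tilde\alpha_{k+1}}\tilde s_{k+1}$ and/or epistemic edges $\tilde s_k\sim_a\tilde s_{k+1}$. Suppose there are concrete states $s_1,\dots,s_n$ with $h(s_k)=\tilde s_k$ for all $k$ such that for each temporal edge $\tau(\alpha_{k+1},s_k)=s_{k+1}$ for some $\alpha_{k+1}$ with $h_A(\alpha_{k+1})=\tilde\alpha_{k+1}$, and for each epistemic edge $l_a(s_k)=l_a(s_{k+1})$ and $s_{k+1}$ is reachable in $I$. If $s_1\in st_1\subseteq h^{-1}(\tilde s_1)$, then $(\tilde\pi,st_1)\Rightarrow^*(\tilde s_n,st_n)$ for some $st_n$ with $s_n\in st_n$; in particular $st_n\neq\emptyset$.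
   Context: $I$ and $\tilde I$ are interpreted systems over the same agents (global states $S,\tilde S$ with $l_a(s)$ the local state of agent $a$; initial states $S_0,\tilde S_0$; partial transition functions $\tau,\tilde\tau$); a state of $I$ is reachable if obtained from $S_0$ by finitely many transitions. $h:S\to\tilde S$ and $h_A:ACT\to\widetilde{ACT}$ are given functions satisfying the compatibility assumption: $h(S_0)\subseteq\tilde S_0$, and whenever $\tau(\alpha,s)$ is defined, $\tilde\tau(h_A(\alpha),h(s))=h(\tau(\alpha,s))$ (this holds for the variable-hiding abstraction of the paper). For $st\subseteq S$ let $L_a(st)=\{l_a(s)\mid s\in st\}$ and $\Theta_\alpha(st)=\{\tau(\alpha,s)\mid s\in st,\ \tau(\alpha,s)\text{ defined}\}$. Paths in $\tilde I$ are written with first edge followed by the rest: $e\,\|\,\pi$; a path of length zero is a state. Rule TemporalCheck: $(\tilde s\xrightarrow{\tilde\alpha}\tilde s'\,\|\,\pi,st)\Rightarrow_t(\pi,\bigcup_{\alpha\in h_A^{-1}(\tilde\alpha)}\Theta_\alpha(st)\cap h^{-1}(\tilde s'))$; $\Rightarrow_t^*$ is a finite sequence of such steps. Rule EpistemicCheck: given a set $W_{\tilde s'}$ of temporal paths $\pi'=\tilde s'_0\xrightarrow{\tilde\alpha'_1}\cdots\xrightarrow{\tilde\alpha'_m}\tilde s'$ with $\tilde s'_0\in\tilde S_0$, let $st'=\bigcup_{\pi'\in W_{\tilde s'}}\{X\mid(\pi',S_0\cap h^{-1}(\tilde s'_0))\Rightarrow_t^*(\tilde s',X)\}$; then $(\tilde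 s\sim_a\tilde s'\,\|\,\pi,st)\Rightarrow_e(\pi,\hat{st})$ with $\hat{st}=\{s\in st'\mid l_a(s)\in L_a(st)\}$. $\Rightarrow^*$ denotes a finite sequence of $\Rightarrow_t$ and $\Rightarrow_e$ steps. *)

From Stdlib Require Import List.
Import ListNotations.
Set Implicit Arguments.

Record IS (Ag : Type) := {
  St : Type;
  Act : Type;
  Loc : Type;
  loc : Ag -> St -> Loc;
  init : St -> Prop;
  tau : Act -> St -> option St
}.
Arguments St {Ag}. Arguments Act {Ag}. Arguments Loc {Ag}.
Arguments loc {Ag}. Arguments init {Ag}. Arguments tau {Ag}.

Section Defs.
Context {Ag : Type} (I J : IS Ag) (h : St I -> St J) (hA : Act I -> Act J).

Inductive reachable : St I -> Prop :=
| reach_init s : init I s -> reachable s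
| reach_step s a s' : reachable s -> tau I a s = Some s' -> reachable s'.

Definition compatible : Prop :=
  (forall s, init I s -> init J (h s)) /\
  (forall a s s', tau I a s = Some s' -> tau J (hA a) (h s) = Some (h s')).

Inductive edge : Type :=
| Temp (al : Act J) (s' : St J)
| Epi (a : Ag) (s' : St J).

Inductive abs_path : St J -> list edge -> Prop :=
| ap_nil s : abs_path s []
| ap_temp s al s' es : tau J al s = Some s' -> abs_path s' es ->
    abs_path s (Temp al s' :: es)
| ap_epi s a s' es : loc J a s = loc J a s' -> abs_path s' es ->
    abs_path s (Epi a s' :: es).

Definition temporal (es : list edge) : Prop :=
  Forall (fun e => match e with Temp _ _ => True | Epi _ _ => False end) es.

Definition edge_target (e : edge) : St J :=
  match e with Temp _ s' => s' | Epi _ s' => s' end.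
Definition path_end (s : St J) (es : list edge) : St J :=
  last (map edge_target es) s.

Definition config : Type := (St J * list edge * (St I -> Prop))%type.

(* Theta_alpha(st) restricted to preimages of s', over alpha in hA^{-1}(al) *)
Definition temp_image (al : Act J) (st : St I -> Prop) (s' : St J) : St I -> Prop :=
  fun s => (exists a s0, hA a = al /\ st s0 /\ tau I a s0 = Some s) /\ h s = s'.

Inductive tstep : config -> config -> Prop :=
| tstep_intro s al s' es st :
    tstep (s, Temp al s' :: es, st) (s', es, temp_image al st s').

Inductive tsteps : config -> config -> Prop :=
| tsteps_refl c : tsteps c c
| tsteps_step c1 c2 c3 : tstep c1 c2 -> tsteps c2 c3 -> tsteps c1 c3.

Definition epi_witness (s' : St J) : St I -> Prop :=
  fun s => exists s0' es X,
    init J s0' /\ abs_path s0' es /\ temporal es /\ path_end s0' es = s' /\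
    tsteps (s0', es, fun x => init I x /\ h x = s0') (s', [], X) /\ X s.

Inductive estep : config -> config -> Prop :=
| estep_intro s a s' es st :
    estep (s, Epi a s' :: es, st)
          (s', es, fun x => epi_witness s' x /\ exists y, st y /\ loc I a y = loc I a x).

Inductive steps : config -> config -> Prop :=
| steps_refl c : steps c c
| steps_t c1 c2 c3 : tstep c1 c2 -> steps c2 c3 -> steps c1 c3
| steps_e c1 c2 c3 : estep c1 c2 -> steps c2 c3 -> steps c1 c3.

Inductive conc_match : St I -> St J -> list edge -> St I -> Prop :=
| cm_nil s st : h s = st -> conc_match s st [] s
| cm_temp s st a al s' st' es sn :
    h s = st -> hA a = al -> tau I a s = Some s' ->
    conc_match s' st' es sn -> conc_match s st (Temp al st' :: es) sn
| cm_epi s st ag s' st' es sn :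
    h s = st -> loc I ag s = loc I ag s' -> reachable s' ->
    conc_match s' st' es sn -> conc_match s st (Epi ag st' :: es) sn.

End Defs.

(* We follow the concrete witness s_1, ..., s_n along the
   abstract path and show, one edge at a time, that the current set of
   candidate states always contains the current witness s_k.
   - A temporal edge s_k --alpha--> s_(k+1) keeps s_(k+1) because it is the
     image of s_k under tau(alpha) and lies over the next abstract state.
   - An epistemic edge s_k ~_a s_(k+1) keeps s_(k+1) because it shares its
     a-local state with s_k and, being reachable, lies in the witness set
     st' of EpistemicCheck: every reachable state s is produced by running
     TemporalCheck along the abstraction of a concrete run leading to s
     (lemma [reachable_epi_witness]). *)

From Stdlib Require Import List.
Import ListNotations.

Section Proposition5.
Context {Ag : Type} {I J : IS Ag} {h : St I -> St J} {hA : Act I -> Act J}.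

Lemma last_cons {A : Type} (x : A) (l : list A) (d : A) :
  last (x :: l) d = last l x.
Proof.
  revert x d; induction l as [|y l IH]; intros x d; [reflexivity|].
  change (last (y :: l) d = last (y :: l) x). now rewrite !IH.
Qed.

Lemma path_end_cons (s : St J) (e : edge J) (es : list (edge J)) :
  path_end s (e :: es) = path_end (edge_target e) es.
Proof. apply last_cons. Qed.

Lemma path_end_snoc (s : St J) (es : list (edge J)) (e : edge J) :
  path_end s (es ++ [e]) = edge_target e.
Proof. unfold path_end. rewrite map_app. apply last_last. Qed.

Lemma abs_path_snoc (s : St J) (es : list (edge J)) al s' :
  abs_path s es -> tau J al (path_end s es) = Some s' ->
  abs_path s (es ++ [Temp J al s']).
Proof.
  intros Hp. induction Hp as [s | s al0 t es Ht Hp IH | s a t es Hl Hp IH];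
    rewrite ?path_end_cons; simpl; intros Hend.
  - constructor; [exact Hend | constructor].
  - constructor; [exact Ht | exact (IH Hend)].
  - constructor; [exact Hl | exact (IH Hend)].
Qed.

Lemma tsteps_snoc {es : list (edge J)} {s st t X} al s' :
  tsteps h hA (s, es, st) (t, [], X) ->
  tsteps h hA (s, es ++ [Temp J al s'], st) (s', [], temp_image I J h hA al X s').
Proof.
  revert s st. induction es as [|e es IH]; intros s st Hrun;
    inversion Hrun as [| c1 c2 c3 Hstep Hrest]; subst.
  - repeat econstructor.
  - inversion Hstep.
  - inversion Hstep; subst. econstructor; [constructor | exact (IH _ _ Hrest)].
Qed.

(* Every reachable concrete state belongs to the EpistemicCheck witness set
   of its abstraction: the abstraction of a concrete run reaching s is a
   temporal path of J from an initial state, and TemporalCheck along it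
   keeps the run's states (by compatibility). *)
Lemma reachable_epi_witness (Hcompat : compatible I J h hA) {s : St I} :
  reachable I s -> epi_witness I J h hA (h s) s.
Proof.
  destruct Hcompat as [Hinit Htau].
  induction 1 as [s Hs | s a s' _ IH Hstep].
  - exists (h s), [], (fun x => init I x /\ h x = h s).
    repeat split; auto; constructor.
  - destruct IH as (s0' & es & X & H0 & Hp & Htmp & Hend & Hrun & HX).
    exists s0', (es ++ [Temp J (hA a) (h s')]), (temp_image I J h hA (hA a) X (h s')).
    repeat split.
    + exact H0.
    + apply abs_path_snoc; [exact Hp | rewrite Hend; exact (Htau _ _ _ Hstep)].
    + apply Forall_app; split; [exact Htmp | repeat constructor].
    + apply path_end_snoc.
    + exact (tsteps_snoc _ _ Hrun).
    + exists a, s; auto.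
Qed.

Lemma conc_match_head {s st es sn} :
  conc_match I h hA s st es sn -> h s = st.
Proof. now destruct 1. Qed.

Lemma conc_match_steps (Hcompat : compatible I J h hA) {s1 s1t es sn} :
  conc_match I h hA s1 s1t es sn ->
  forall st1 : St I -> Prop, st1 s1 ->
  exists stn, steps h hA (s1t, es, st1) (path_end s1t es, [], stn) /\ stn sn.
Proof.
  induction 1 as [s st Hh
                 | s st a al s' st' es sn Hh Hal Hstep Hm IH
                 | s st ag s' st' es sn Hh Hloc Hreach Hm IH];
    intros st1 Hs1; rewrite ?path_end_cons.
  - exists st1. split; [constructor | exact Hs1].
  - assert (Hnext : temp_image I J h hA al st1 st' s').
    { split; [exists a, s; auto | exact (conc_match_head Hm)]. }
    destruct (IH _ Hnext) as (stn & Hrun & Hn).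
    exists stn. split; [eapply steps_t; [constructor | exact Hrun] | exact Hn].
  - pose (next x := epi_witness I J h hA st' x /\ exists y, st1 y /\ loc I ag y = loc I ag x).
    assert (Hnext : next s').
    { split.
      - rewrite <- (conc_match_head Hm). exact (reachable_epi_witness Hcompat Hreach).
      - exists s; auto. }
    destruct (IH _ Hnext) as (stn & Hrun & Hn).
    exists stn. split; [eapply steps_e; [constructor | exact Hrun] | exact Hn].
Qed.

End Proposition5.

Theorem proposition5 (Ag : Type) (I J : IS Ag) (h : St I -> St J)
  (hA : Act I -> Act J)
  (Hcompat : compatible I J h hA)
  (s1t : St J) (es : list (edge J))
  (Hpath : abs_path s1t es)
  (s1 sn : St I)
  (Hconc : conc_match I h hA s1 s1t es sn)
  (st1 : St I -> Prop)
  (Hs1 : st1 s1)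
  (Hst1 : forall s, st1 s -> h s = s1t) :
  exists stn : St I -> Prop,
    steps h hA (s1t, es, st1) (path_end s1t es, [], stn) /\ stn sn
    /\ (exists s, stn s).
Proof.
  destruct (conc_match_steps Hcompat Hconc st1 Hs1) as (stn & Hrun & Hn).
  exists stn. split; [exact Hrun | split; [exact Hn | exists sn; exact Hn]].
Qed.
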